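(* Let $k\ge 2$ and $\Delta\ge 2$ be integers. For $n\ge 0$ let $p_n=\mu_n(\sigma_\rho=1\mid \sigma_{L_n}=1)$, where $\sigma_{L_n}=1$ means that every vertex of $L_n$ is in the independent set. Then the independent set model has uniqueness on $\mathbb{T}_{k,\Delta}$ if and only if $\limsup_{n\to\infty}|p_{n+1}-p_n|=0$.
   Context: $\mathbb{T}_{k,\Delta}$ is the infinite $(\Delta-1)$-ary $k$-uniform hypertree with root $\rho$: recursively, each vertex has $\Delta-1$ descending hyperedges, each consisting of that vertex together with $k-1$ new vertices (its children). For $n\ge 0$, $\mathbb{T}(n)$ is the finite sub-hypergraph induced by the vertices at distance at most $n$ from $\rho$ (i.e. the first $n$ generations below $\rho$), with vertex set $V_n$, and $L_n$ is the set of vertices at distance exactly $n$ from $\rho$ (its leaves). Independent sets of a hypergraph are vertex subsets containing no hyperedge; an independent set $I$ is identified with $\sigma:V_n\to\{0,1\}$, $\sigma(v)=1$ iff $v\in I$. $\mu_n$ is the uniform distribution on independent sets of $\mathbb{T}(n)$. The independent set model has uniqueness on $\mathbb{T}_{k,\Delta}$ iff $\limsup_{n\to\infty}\max_{\eta,\eta':L_n\to\{0,1\}}|\mu_n(\sigma_\rho=1\mid\sigma_{L_n}=\eta)-\mu_n(\sigma_\rho=1\mid\sigma_{L_n}=\eta')|=0$, where $\sigma_\rho$ is the spin of the root and $\sigma_{L_n}$ the restriction of $\sigma$ to $L_n$. *)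

From HB Require Import structures.
From mathcomp Require Import all_boot all_order all_algebra.
From mathcomp Require Import all_classical all_reals all_analysis.
Set Implicit Arguments. Unset Strict Implicit. Unset Printing Implicit Defensive.
Import Order.TTheory GRing.Theory Num.Theory.
Local Open Scope ring_scope.

(* Vertices of the (Delta-1)-ary k-uniform hypertree T_{k,Delta} are words over
   the alphabet  step = 'I_(Delta-1) * 'I_(k-1):  the root rho is the empty
   word, and the k-1 children of w in its e-th descending hyperedge are the
   words  rcons w (e, c)  for c : 'I_(k-1).  The distance from rho is the
   length of the word. *)
Definition step (k D : nat) : finType := ('I_D.-1 * 'I_k.-1)%type.

Fixpoint allw (A : finType) (n : nat) : seq (seq A) :=
  if n is m.+1 then [::] :: [seq a :: w | a <- enum A, w <- allw A m]
  else [:: [::]].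

Definition vert (k D n : nat) : finType := seq_sub (allw (step k D) n).

Definition inI (k D n : nat) (I : {set vert k D n}) (w : seq (step k D)) : bool :=
  [exists v in I, val v == w].

(* The
   hyperedges of the induced sub-hypergraph T(n) are the descending hyperedges
   {w} \cup {rcons w (e,c) | c} of the vertices w with |w| < n. *)
Definition indep (k D n : nat) (I : {set vert k D n}) : bool :=
  [forall v : vert k D n, forall e : 'I_D.-1,
     (size (val v) < n)%N ==>
     ~~ (inI I (val v) && [forall c : 'I_k.-1, inI I (rcons (val v) (e, c))])].

(* sigma_{L_n} = eta, where L_n = vertices at distance exactly n *)
Definition agree (k D n : nat) (I : {set vert k D n}) (eta : {ffun vert k D n -> bool}) : bool :=
  [forall v : vert k D n, (size (val v) == n) ==> ((v \in I) == eta v)].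

(* mu_n(sigma_rho = 1 | sigma_{L_n} = eta), mu_n uniform on independent sets *)
Definition condprob (R : realType) (k D n : nat) (eta : {ffun vert k D n -> bool}) : R :=
  (#|[set I : {set vert k D n} | [&& indep I, agree I eta & inI I [::]]]|%:R)
  / (#|[set I : {set vert k D n} | indep I && agree I eta]|%:R).

Definition maxdiff (R : realType) (k D n : nat) : R :=
  \big[Num.max/0]_(eta : {ffun vert k D n -> bool})
    \big[Num.max/0]_(eta' : {ffun vert k D n -> bool})
      `|condprob R eta - condprob R eta'|.

Definition uniqueness (R : realType) (k D : nat) : Prop :=
  limn_sup (fun n => maxdiff R k D n) = 0.

Definition pn (R : realType) (k D n : nat) : R :=
  condprob R [ffun _ : vert k D n => true].

From HB Require Import structures.
From mathcomp Require Import all_boot all_order all_algebra.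
From mathcomp Require Import all_classical all_reals all_analysis.
From mathcomp Require Import ring lra.
Import Order.TTheory GRing.Theory Num.Theory.
Local Open Scope ring_scope.
Set Implicit Arguments. Unset Strict Implicit.

(* Fixing the spin of the root splits an independent set of T(n+1) into
   independent sets of the (Delta-1)(k-1) subtrees T(n) hanging from the children,
   the only constraint being that no descending hyperedge of the root is fully
   occupied.  Hence the root occupation probability under a boundary condition
   is r/(1+r) with r = prod_e (1 - prod_c q_{e,c}), where q_{e,c} are the
   occupation probabilities of the children under the induced boundary
   conditions.  This map is decreasing in every q_{e,c}, so by induction the
   all-occupied and the all-empty boundary conditions are the extreme ones, and
   the maximal discrepancy at depth n is |p_n - b_n|, b_n being the probability
   under the empty boundary.  Finally b_n = p_{n+1}: both satisfy the same
   recursion, and b_0 = 0 = p_1 because when Delta >= 2 a fully occupied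
   hyperedge forbids an occupied root. *)

Lemma mem_allw (A : finType) n (w : seq A) : (w \in allw A n) = (size w <= n)%N.
Proof.
elim: n w => [|n IH] [|a w] //=.
rewrite in_cons /= ltnS -IH; apply/allpairsP/idP => [[[x y] /= [_ Hy [_ ->]]] //|H].
by exists (a, w); rewrite mem_enum.
Qed.

Lemma forall_andb (T : finType) (P Q : pred T) :
  [forall x, P x && Q x] = [forall x, P x] && [forall x, Q x].
Proof.
apply/forallP/andP => [H|[/forallP HP /forallP HQ] x]; last by rewrite HP HQ.
by split; apply/forallP => x; case/andP: (H x).
Qed.

Lemma natr_forall (R : comPzSemiRingType) (I : finType) (P : pred I) :
  [forall i, P i]%:R = \prod_i (P i)%:R :> R.
Proof.
have [/forallP H|/forallPn [i Hi]] := boolP [forall i, P i].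
  by rewrite big1 // => i _; rewrite H.
by rewrite (bigD1 i) //= (negbTE Hi) mul0r.
Qed.

Lemma natr_andNb (R : pzRingType) (a b : bool) :
  (~~ a && b)%:R = b%:R - (b && a)%:R :> R.
Proof. by case: a; case: b; rewrite ?subrr ?subr0. Qed.

Lemma natr_card_set (R : pzSemiRingType) (T : finType) (P : pred T) :
  #|[set x | P x]|%:R = \sum_x (P x)%:R :> R.
Proof.
rewrite -sum1_card natr_sum big_mkcond; apply: eq_bigr => x _.
by rewrite inE; case: (P x).
Qed.

Lemma le_ratio1D (R : realFieldType) (a b : R) :
  0 <= a -> a <= b -> a / (1 + a) <= b / (1 + b).
Proof.
move=> a_ge0 le_ab; rewrite ler_pdivrMr; last lra.
rewrite mulrAC ler_pdivlMr; [nra | lra].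
Qed.

Section Hypertree.

Variables k D : nat.
Local Notation word := (seq (step k D)).
Local Notation vert := (vert k D).
Local Notation forest n := {ffun 'I_D.-1 -> {ffun 'I_k.-1 -> {set vert n}}}.

Lemma vert_size n (v : vert n) : (size (val v) <= n)%N.
Proof. by rewrite -mem_allw; apply: ssvalP. Qed.

Lemma inI_val n (I : {set vert n}) (v : vert n) w : val v = w -> inI I w = (v \in I).
Proof.
move=> <-; apply/existsP/idP => [[u /andP [Hu /eqP /val_inj <-]] //|Hv].
by exists v; rewrite Hv eqxx.
Qed.

Lemma inI_set n (p : pred word) w :
  inI [set v : vert n | p (val v)] w = (size w <= n)%N && p w.
Proof.
apply/existsP/andP => [[u /andP [Hu /eqP <-]]|[Hs Hp]].
  by rewrite inE in Hu; rewrite vert_size.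
have Hw : w \in allw (step k D) n by rewrite mem_allw.
by exists (SeqSub Hw); rewrite inE /= Hp eqxx.
Qed.

Lemma inI_size n (I : {set vert n}) w : inI I w -> (size w <= n)%N.
Proof. by case/existsP => u /andP [_ /eqP <-]; apply: vert_size. Qed.

Lemma indepP n (I : {set vert n}) :
  reflect (forall w e, (size w < n)%N ->
             ~~ (inI I w && [forall c, inI I (rcons w (e, c))]))
          (indep I).
Proof.
apply: (iffP forallP) => [H w e Hs|H v].
  have Hw : w \in allw (step k D) n by rewrite mem_allw ltnW.
  by move/forallP: (H (SeqSub Hw)) => /(_ e) /implyP; apply.
by apply/forallP => e; apply/implyP; apply: H.
Qed.

(* Boundary conditions are read on words, so that they restrict to subtrees. *)
Definition agree_fun n (I : {set vert n}) (g : word -> bool) : bool :=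
  [forall v : vert n, (size (val v) == n) ==> ((v \in I) == g (val v))].

Lemma agree_funP n (I : {set vert n}) g :
  reflect (forall w, size w = n -> inI I w = g w) (agree_fun I g).
Proof.
apply: (iffP forallP) => [H w Hs|H v].
  have Hw : w \in allw (step k D) n by rewrite mem_allw Hs.
  move/implyP: (H (SeqSub Hw)); rewrite /= Hs eqxx => /(_ isT) /eqP <-.
  exact: inI_val.
by apply/implyP => /eqP Hs; rewrite -(H _ Hs) (inI_val _ (erefl _)).
Qed.

Definition bdry_of n (eta : {ffun vert n -> bool}) (w : word) : bool :=
  [exists v, (val v == w) && eta v].

Lemma agree_funE n (I : {set vert n}) eta : agree I eta = agree_fun I (bdry_of eta).
Proof.
apply: eq_forallb => v; congr (_ ==> (_ == _)); apply/esym; apply/existsP/idP.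
  by case=> u /andP [/eqP /val_inj ->].
by exists v; rewrite eqxx.
Qed.

Lemma agree_fun_ext n (I : {set vert n}) g g' :
  (forall w, size w = n -> g w = g' w) -> agree_fun I g = agree_fun I g'.
Proof. by move=> Hg; apply/agree_funP/agree_funP => H w Hs; rewrite H ?Hg. Qed.

Definition admissible n (g : word -> bool) (I : {set vert n}) : bool :=
  indep I && agree_fun I g.

Definition child (g : word -> bool) (e : 'I_D.-1) (c : 'I_k.-1) : word -> bool :=
  g \o cons (e, c).

Definition graft_mem n (b : bool) (F : forest n) (w : word) : bool :=
  if w is a :: w' then inI (F a.1 a.2) w' else b.

Definition graft n (b : bool) (F : forest n) : {set vert n.+1} :=
  [set v | graft_mem b F (val v)].

Definition ungraft n (J : {set vert n.+1}) : bool * forest n :=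
  (inI J [::], [ffun e => [ffun c => [set u : vert n | inI J ((e, c) :: val u)]]]).

Lemma inI_graft_nil n b (F : forest n) : inI (graft b F) [::] = b.
Proof. by rewrite inI_set. Qed.

Lemma inI_graft_cons n b (F : forest n) e c w :
  inI (graft b F) ((e, c) :: w) = inI (F e c) w.
Proof. by rewrite inI_set /= ltnS andb_idl //; apply: inI_size. Qed.

Lemma graft_bij n : bijective (fun p : bool * forest n => graft p.1 p.2).
Proof.
exists (@ungraft n) => [[b F]|J].
  rewrite /ungraft inI_graft_nil; congr pair; apply/ffunP => e; apply/ffunP => c.
  by rewrite !ffunE; apply/setP => u; rewrite inE inI_graft_cons (inI_val _ (erefl _)).
apply/setP => v; rewrite inE /graft_mem /ungraft /=; case E: (val v) => [|[e c] w].
  by rewrite (inI_val _ E).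
rewrite !ffunE (@inI_set n (fun w => inI J ((e, c) :: w))) andb_idl ?(inI_val _ E) //.
by have := vert_size v; rewrite E.
Qed.

Lemma indep_graft n b (F : forest n) :
  indep (graft b F) = (b ==> [forall e, ~~ [forall c, inI (F e c) [::]]])
                      && [forall e, forall c, indep (F e c)].
Proof.
apply/indepP/andP => [H|[Hb /forallP HF] w e Hs].
  split.
    apply/implyP => Hroot; apply/forallP => e; apply/negP => /forallP Hc.
    move/negP: (H [::] e isT); apply; rewrite inI_graft_nil Hroot.
    by apply/forallP => c; rewrite inI_graft_cons.
  apply/forallP => e; apply/forallP => c; apply/indepP => w e' Hs.
  apply/negP => /andP [Hw /forallP Hc].
  move/negP: (H ((e, c) :: w) e' Hs); apply; rewrite inI_graft_cons Hw.
  by apply/forallP => c'; rewrite rcons_cons inI_graft_cons.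
case: w Hs => [|[e' c'] w] Hs; apply/negP => /andP [Hr /forallP Hc].
  move: Hr; rewrite inI_graft_nil => /(implyP Hb) /forallP /(_ e) /negP; apply.
  by apply/forallP => c; have := Hc c; rewrite inI_graft_cons.
move/forallP: (HF e') => /(_ c') /indepP /(_ w e Hs) /negP; apply.
rewrite inI_graft_cons in Hr; rewrite Hr.
by apply/forallP => c; have := Hc c; rewrite rcons_cons inI_graft_cons.
Qed.

Lemma agree_graft n b (F : forest n) g :
  agree_fun (graft b F) g = [forall e, forall c, agree_fun (F e c) (child g e c)].
Proof.
apply/agree_funP/forallP => [H e|H [|[e c] w] //= [Hs]].
  apply/forallP => c; apply/agree_funP => w Hs.
  by rewrite /child /= -H /= ?Hs // inI_graft_cons.
by rewrite inI_graft_cons; move/forallP: (H e) => /(_ c) /agree_funP ->.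
Qed.

Lemma admissible_graft n b (F : forest n) g :
  admissible g (graft b F) =
    (b ==> [forall e, ~~ [forall c, inI (F e c) [::]]])
    && [forall e, forall c, admissible (child g e c) (F e c)].
Proof.
rewrite /admissible indep_graft agree_graft -andbA -forall_andb.
by congr andb; apply: eq_forallb => e; rewrite -forall_andb.
Qed.

Lemma inI_vert0_set (b : bool) : inI [set _ : vert 0 | b] [::] = b.
Proof. by rewrite (@inI_set 0 (fun=> b)). Qed.

Lemma vert0_set_bij : bijective (fun b => [set _ : vert 0 | b]).
Proof.
exists (fun I => inI I [::]) => [b|I]; first exact: inI_vert0_set.
apply/setP => v; rewrite inE.
by have := vert_size v; rewrite leqn0 => /nilP E; rewrite (inI_val _ E).
Qed.

Lemma admissible0 g (I : {set vert 0}) : admissible g I = (inI I [::] == g [::]).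
Proof.
rewrite /admissible (introT (indepP _)) //.
by apply/agree_funP/eqP => [-> //|H [|a w] //].
Qed.

End Hypertree.

Section PartitionFunctions.

Variables (R : comNzRingType) (k D : nat).
Local Notation word := (seq (step k D)).
Local Notation vert := (vert k D).
Local Notation forest n := {ffun 'I_D.-1 -> {ffun 'I_k.-1 -> {set vert n}}}.

Definition Zpart n (g : word -> bool) : R :=
  \sum_(I : {set vert n}) (admissible g I)%:R.

Definition Zroot n (g : word -> bool) : R :=
  \sum_(I : {set vert n}) (admissible g I && inI I [::])%:R.

Lemma sum_set_vertS n (h : {set vert n.+1} -> R) :
  \sum_J h J = \sum_(b : bool) \sum_(F : forest n) h (graft b F).
Proof.
rewrite (reindex (fun p : bool * forest n => graft p.1 p.2)) /=.
  by rewrite pair_big; apply: eq_bigl => -[].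
by apply: onW_bij; apply: graft_bij.
Qed.

Lemma sum_set_vert0 (h : {set vert 0} -> R) :
  \sum_I h I = \sum_(b : bool) h [set _ | b].
Proof.
by rewrite (reindex (fun b => [set _ : vert 0 | b])) //; apply/onW_bij/vert0_set_bij.
Qed.

Lemma Zpart0 g : Zpart 0 g = 1.
Proof.
rewrite /Zpart sum_set_vert0 big_bool /= !admissible0 !inI_vert0_set.
by case: (g [::]); rewrite ?addr0 ?add0r.
Qed.

Lemma Zroot0 g : Zroot 0 g = (g [::])%:R.
Proof.
rewrite /Zroot sum_set_vert0 big_bool /= !admissible0 !inI_vert0_set.
by case: (g [::]); rewrite ?addr0 ?add0r.
Qed.

Lemma sum_forest_prod n (G : 'I_D.-1 -> 'I_k.-1 -> {set vert n} -> R) :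
  \sum_(F : forest n) \prod_e \prod_c G e c (F e c) = \prod_e \prod_c \sum_X G e c X.
Proof.
under [RHS]eq_bigr => e _ do rewrite bigA_distr_bigA.
by rewrite bigA_distr_bigA.
Qed.

Lemma Zroot_graft n g :
  Zroot n.+1 g = \sum_(F : forest n) (admissible g (graft true F))%:R.
Proof.
rewrite /Zroot sum_set_vertS big_bool /= [X in _ + X]big1 ?addr0 => [|F _].
  by apply: eq_bigr => F _; rewrite inI_graft_nil andbT.
by rewrite inI_graft_nil andbF.
Qed.

Lemma ZpartS n g :
  Zpart n.+1 g = Zroot n.+1 g + \prod_e \prod_c Zpart n (child g e c).
Proof.
rewrite Zroot_graft /Zpart sum_set_vertS big_bool /= -sum_forest_prod.
congr (_ + _); apply: eq_bigr => F _.
by rewrite admissible_graft /= natr_forall; apply: eq_bigr => e _; rewrite natr_forall.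
Qed.

Lemma ZrootS n g :
  Zroot n.+1 g = \prod_e (\prod_c Zpart n (child g e c) - \prod_c Zroot n (child g e c)).
Proof.
pose adm e c (X : {set vert n}) : R := (admissible (child g e c) X)%:R.
pose adm_root e c (X : {set vert n}) : R :=
  (admissible (child g e c) X && inI X [::])%:R.
transitivity (\sum_(F : forest n)
                \prod_e (\prod_c adm e c (F e c) - \prod_c adm_root e c (F e c))).
  rewrite Zroot_graft; apply: eq_bigr => F _.
  rewrite admissible_graft /= -forall_andb natr_forall; apply: eq_bigr => e _.
  by rewrite natr_andNb -forall_andb !natr_forall.
under [RHS]eq_bigr => e _ do rewrite !bigA_distr_bigA -sumrB.
by rewrite bigA_distr_bigA.
Qed.

End PartitionFunctions.

Section TreeMap.

Variables (R : realFieldType) (I J : finType).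

Definition tree_map (x : I -> J -> R) : R :=
  let r := \prod_i (1 - \prod_j x i j) in r / (1 + r).

Lemma tree_map_le (x y : I -> J -> R) :
  (forall i j, 0 <= x i j) -> (forall i j, x i j <= y i j) -> (forall i j, y i j <= 1) ->
  tree_map y <= tree_map x.
Proof.
move=> x_ge0 le_xy y_le1.
have y_ge0 i j : 0 <= y i j by apply: le_trans (le_xy i j).
have prod_y_le1 i : \prod_j y i j <= 1 by apply: prodr_ile1 => j _; rewrite y_ge0 y_le1.
apply: le_ratio1D.
  by apply: prodr_ge0 => i _; rewrite subr_ge0.
apply: ler_prod => i _; rewrite subr_ge0 prod_y_le1 lerB //.
by apply: ler_prod => j _; rewrite x_ge0 le_xy.
Qed.

Lemma tree_map_sandwich (lo hi : R) (x : I -> J -> R) :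
  0 <= lo -> hi <= 1 -> (forall i j, lo <= x i j <= hi) ->
  tree_map (fun _ _ => hi) <= tree_map x <= tree_map (fun _ _ => lo).
Proof.
move=> lo_ge0 hi_le1 Hx.
by apply/andP; split; apply: tree_map_le => i j; case/andP: (Hx i j) => *; lra.
Qed.

Lemma tree_map1 (i0 : I) : tree_map (fun _ _ => 1) = 0.
Proof. by rewrite /tree_map big1_eq subrr (bigD1 i0) //= !mul0r. Qed.

End TreeMap.

Section Occupation.

Variables (R : realFieldType) (k D : nat).
Local Notation word := (seq (step k D)).
Local Notation Zpart := (Zpart R).
Local Notation Zroot := (Zroot R).

Lemma Zroot_ge0 n (g : word -> bool) : 0 <= Zroot n g.
Proof. by apply: sumr_ge0 => I _; apply: ler0n. Qed.

Lemma Zroot_le_Zpart n (g : word -> bool) : Zroot n g <= Zpart n g.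
Proof. by apply: ler_sum => I _; rewrite ler_nat; case: admissible; case: inI. Qed.

Lemma Zpart_gt0 n (g : word -> bool) : 0 < Zpart n g.
Proof.
elim: n g => [|n IH] g; first by rewrite Zpart0 ltr01.
rewrite ZpartS ltr_wpDl ?Zroot_ge0 //.
by apply: prodr_gt0 => e _; apply: prodr_gt0 => c _; apply: IH.
Qed.

Definition occ n (g : word -> bool) : R := Zroot n g / Zpart n g.

Lemma occ_itv n (g : word -> bool) : 0 <= occ n g <= 1.
Proof.
rewrite /occ divr_ge0 ?Zroot_ge0 ?(ltW (Zpart_gt0 _ _)) //=.
by rewrite ler_pdivrMr ?Zpart_gt0 // mul1r Zroot_le_Zpart.
Qed.

Lemma occ0 (g : word -> bool) : occ 0 g = (g [::])%:R.
Proof. by rewrite /occ Zpart0 Zroot0 divr1. Qed.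

Lemma occS n (g : word -> bool) :
  occ n.+1 g = tree_map (fun e c => occ n (child g e c)).
Proof.
set Z := \prod_e \prod_c Zpart n (child g e c).
set r := \prod_e (1 - \prod_c occ n (child g e c)).
have Z_gt0 : 0 < Z by apply: prodr_gt0 => e _; apply: prodr_gt0 => c _; apply: Zpart_gt0.
have r_ge0 : 0 <= r.
  by apply: prodr_ge0 => e _; rewrite subr_ge0; apply: prodr_ile1 => c _; apply: occ_itv.
have ZrootE : Zroot n.+1 g = Z * r.
  rewrite ZrootS /Z /r -big_split /=; apply: eq_bigr => e _.
  rewrite /occ prodf_div mulrBr mulr1 mulrCA divff ?mulr1 //.
  by apply/lt0r_neq0/prodr_gt0 => c _; apply: Zpart_gt0.
rewrite /occ ZpartS ZrootE -/Z /tree_map -/r.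
field; apply/andP; split; rewrite lt0r_neq0 //; nra.
Qed.

Lemma occ_ext n (g g' : word -> bool) :
  (forall w, size w = n -> g w = g' w) -> occ n g = occ n g'.
Proof.
move=> Hg; rewrite /occ /Zroot /Zpart /admissible.
by congr (_ / _); apply: eq_bigr => I _; rewrite (agree_fun_ext I Hg).
Qed.

Definition occ_all n : R := occ n (fun _ : word => true).
Definition occ_none n : R := occ n (fun _ : word => false).

Lemma occ_allS n :
  occ_all n.+1 = tree_map (fun (_ : 'I_D.-1) (_ : 'I_k.-1) => occ_all n).
Proof. exact: occS. Qed.

Lemma occ_noneS n :
  occ_none n.+1 = tree_map (fun (_ : 'I_D.-1) (_ : 'I_k.-1) => occ_none n).
Proof. exact: occS. Qed.

(* The tree map reverses order, so the all-occupied and all-empty boundaries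
   alternate as the extreme ones. *)
Lemma occ_between n (g : word -> bool) :
  if odd n then occ_all n <= occ n g <= occ_none n
  else occ_none n <= occ n g <= occ_all n.
Proof.
elim: n g => [|n IH] g.
  by rewrite /occ_all /occ_none !occ0; case: (g [::]); rewrite /= lexx ler01.
rewrite occS occ_allS occ_noneS /=.
have /andP [all_ge0 all_le1] := occ_itv n (fun=> true).
have /andP [none_ge0 none_le1] := occ_itv n (fun=> false).
by case: (odd n) IH => /= IH; apply: tree_map_sandwich => // e c; apply: IH.
Qed.

Lemma occ_dist_le n (g g' : word -> bool) :
  `|occ n g - occ n g'| <= `|occ_all n - occ_none n|.
Proof.
have := occ_between n g; have := occ_between n g'.
case: (odd n) => /andP [h1 h2] /andP [h3 h4]; last first.
  by apply: le_trans (ler_norm _); rewrite ler_norml; apply/andP; split; lra.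
rewrite [X in _ <= X]distrC; apply: le_trans (ler_norm _).
by rewrite ler_norml; apply/andP; split; lra.
Qed.

Lemma occ_none_all (hD : (0 < D.-1)%N) n : occ_none n = occ_all n.+1.
Proof.
elim: n => [|n IH]; last by rewrite occ_noneS IH -occ_allS.
rewrite occ_allS /occ_all /occ_none !occ0.
by rewrite (tree_map1 _ _ (Ordinal hD)).
Qed.

End Occupation.

Section Uniqueness.

Variables (R : realType) (k D : nat).

Lemma condprob_occ n (eta : {ffun vert k D n -> bool}) :
  condprob R eta = occ R n (bdry_of eta).
Proof.
rewrite /condprob /occ /Zroot /Zpart !natr_card_set /admissible.
by congr (_ / _); apply: eq_bigr => I _; rewrite agree_funE ?andbA.
Qed.

Lemma condprob_const n (b : bool) :
  condprob R [ffun _ : vert k D n => b] = occ R n (fun _ : seq (step k D) => b).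
Proof.
rewrite condprob_occ; apply: occ_ext => w Hs; rewrite /bdry_of.
have Hw : w \in allw (step k D) n by rewrite mem_allw Hs.
apply/existsP/idP => [[v /andP [_]]|->]; first by rewrite ffunE.
by exists (SeqSub Hw); rewrite ffunE eqxx.
Qed.

Lemma maxdiffE n : maxdiff R k D n = `|occ_all R k D n - occ_none R k D n|.
Proof.
apply/le_anti/andP; split.
  apply: (big_ind (fun x => x <= _)) => [|x y hx hy|eta _]; rewrite ?ge_max ?hx //.
  apply: (big_ind (fun x => x <= _)) => [|x y hx hy|eta' _]; rewrite ?ge_max ?hx //.
  by rewrite !condprob_occ occ_dist_le.
rewrite /maxdiff (bigD1 [ffun _ => true]) //= le_max; apply/orP; left.
rewrite (bigD1 [ffun _ => false]) //= le_max; apply/orP; left.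
by rewrite !condprob_const.
Qed.

End Uniqueness.

Theorem lemma55 (R : realType) (k D : nat) (hk : (2 <= k)%N) (hD : (2 <= D)%N) :
  uniqueness R k D <->
  limn_sup (fun n => `|pn R k D n.+1 - pn R k D n|) = 0.
Proof.
have maxdiff_pn n : maxdiff R k D n = `|pn R k D n.+1 - pn R k D n|.
  rewrite maxdiffE /pn !condprob_const (occ_none_all _ _ (_ : 0 < D.-1)%N) 1?distrC //.
  by rewrite -ltnS prednK // ltnW.
by rewrite /uniqueness (boolp.funext maxdiff_pn).
Qed.
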